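(* Let $N\ge2$ be an integer and let $B=(b_{i,j})_{i,j=1}^{N-1}$ be the symmetric Toeplitz matrix with $b_{i,i}=\frac{2N}{3}-1$, $b_{i,j}=\frac N6-1$ if $|i-j|=1$, and $b_{i,j}=-1$ if $|i-j|\ge2$. Let $L_{N-1}=\mathrm{tridiag}(-1,2,-1)$ be the $(N-1)\times(N-1)$ one-dimensional discrete Laplacian. Then $H:=B-\frac N{12}L_{N-1}$ is positive semi-definite. Moreover, $H$ is singular when $N$ is even and positive definite when $N$ is odd. *)

From HB Require Import structures.
From mathcomp Require Import all_boot all_order all_algebra.
Set Implicit Arguments. Unset Strict Implicit. Unset Printing Implicit Defensive.
Import Order.TTheory GRing.Theory Num.Theory.
Local Open Scope ring_scope.

Definition idist (i j : nat) : nat := (i - j) + (j - i).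

Definition Bmat (R : realFieldType) (N : nat) : 'M[R]_(N.-1) :=
  \matrix_(i, j)
    if idist i j == 0%N then (2 * N%:R) / 3 - 1
    else if idist i j == 1%N then N%:R / 6 - 1
    else -1.

Definition Lap (R : realFieldType) (n : nat) : 'M[R]_n :=
  \matrix_(i, j)
    if idist i j == 0%N then 2
    else if idist i j == 1%N then -1
    else 0.

Definition Hmat (R : realFieldType) (N : nat) : 'M[R]_(N.-1) :=
  Bmat R N - (N%:R / 12) *: Lap R (N.-1).

Definition psd (R : realFieldType) (n : nat) (A : 'M[R]_n) : Prop :=
  A^T = A /\ forall x : 'cV[R]_n, 0 <= (x^T *m A *m x) 0 0.

Definition pd (R : realFieldType) (n : nat) (A : 'M[R]_n) : Prop :=
  A^T = A /\ forall x : 'cV[R]_n, x != 0 -> 0 < (x^T *m A *m x) 0 0.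

Definition singular (R : realFieldType) (n : nat) (A : 'M[R]_n) : Prop :=
  \det A = 0.

(* Let N = m + 1 and let D be the (m+1) x m signless incidence matrix of the
   path with m + 1 vertices (column i has ones in rows i and i + 1).  Then
   D^T D = tridiag(1, 2, 1) and every column of D sums to 2, so
   H = 1/4 D^T (N I - J) D, where N I - J is the Laplacian of the complete
   graph K_N.  Hence x^T H x = 1/8 sum_(k,l) (y_k - y_l)^2 with y = D x: H is
   positive semi-definite, and x^T H x = 0 forces D x to be constant.
   Alternating partial sums of D x recover x, and the full alternating sum
   of D x vanishes; for N odd this kills any constant D x, so x = 0.  For N
   even, D maps the indicator of the even indices to the all-ones vector,
   which N I - J annihilates. *)

From HB Require Import structures.
From mathcomp Require Import all_boot all_order all_algebra.
From mathcomp Require Import zify ring lra.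
Import Order.TTheory GRing.Theory Num.Theory.
Local Open Scope ring_scope.
Set Implicit Arguments. Unset Strict Implicit.

Section HmatFactorization.
Variable R : realFieldType.

Lemma sum_ord_delta n a (F : nat -> R) :
  \sum_(k < n) (k == a :> nat)%:R * F k = if (a < n)%N then F a else 0.
Proof.
transitivity (\sum_(k < n | k == a :> nat) F k); last exact: big_ord1_eq.
rewrite [RHS]big_mkcond; apply: eq_bigr => k _.
by case: eqP; rewrite ?mul1r ?mul0r.
Qed.

Lemma sum_signr n : \sum_(k < n) (-1) ^+ k = (odd n)%:R :> R.
Proof.
elim: n => [|n IH]; first by rewrite big_ord0.
by rewrite big_ord_recr /= IH -signr_odd; case: (odd n) => /=; ring.
Qed.

Lemma sum_sqr_diff n (y : 'I_n -> R) :
  \sum_k \sum_l (y k - y l) ^+ 2 =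
  2 * (n%:R * \sum_k y k ^+ 2 - (\sum_k y k) ^+ 2).
Proof.
have inner k : \sum_l (y k - y l) ^+ 2 =
    y k ^+ 2 *+ n - 2 * y k * \sum_l y l + \sum_l y l ^+ 2.
  rewrite mulr_sumr -[X in _ *+ X](card_ord n) -sumr_const -sumrB -big_split.
  by apply: eq_bigr => l _; rewrite /=; ring.
under eq_bigr do rewrite inner.
rewrite big_split sumrB /= -mulr_suml -mulr_sumr sumrMnl sumr_const card_ord.
by rewrite -mulr_natr; ring.
Qed.

Definition complete_laplacian n : 'M[R]_n := n%:R%:M - const_mx 1.

Lemma complete_laplacian_formE n (z : 'cV[R]_n) :
  (z^T *m complete_laplacian n *m z) 0 0 =
  2^-1 * \sum_k \sum_l (z k 0 - z l 0) ^+ 2.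
Proof.
rewrite sum_sqr_diff mulKf ?pnatr_eq0 //.
rewrite /complete_laplacian mulmxBr mulmxBl mul_mx_scalar -scalemxAl !mxE.
congr (_ * _ - _); first by apply: eq_bigr => k _; rewrite mxE expr2.
rewrite expr2 mulr_sumr; apply: eq_bigr => l _; rewrite !mxE; congr (_ * _).
by apply: eq_bigr => k _; rewrite !mxE mulr1.
Qed.

Lemma complete_laplacian_form_ge0 n (z : 'cV[R]_n) :
  0 <= (z^T *m complete_laplacian n *m z) 0 0.
Proof.
rewrite complete_laplacian_formE mulr_ge0 ?invr_ge0 ?ler0n //.
by do 2 apply: sumr_ge0 => ? _; exact: sqr_ge0.
Qed.

Lemma complete_laplacian_form_eq0 n (z : 'cV[R]_n.+1) :
  (z^T *m complete_laplacian n.+1 *m z) 0 0 = 0 -> z = const_mx (z ord0 0).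
Proof.
rewrite complete_laplacian_formE => /eqP.
rewrite mulf_eq0 invr_eq0 pnatr_eq0 /= => /eqP sum0.
apply/matrixP => k j; rewrite (ord1 j) mxE.
have row_k0 : \sum_l (z k 0 - z l 0) ^+ 2 = 0.
  by apply: (psumr_eq0P _ sum0) => // i _; apply: sumr_ge0 => l _; exact: sqr_ge0.
have /eqP := psumr_eq0P (fun l _ => sqr_ge0 _) row_k0 (i := ord0) isT.
by rewrite sqrf_eq0 subr_eq0 => /eqP.
Qed.

Lemma complete_laplacian_mul_const n :
  complete_laplacian n *m const_mx 1 = 0 :> 'cV[R]_n.
Proof.
apply/matrixP => i j; rewrite /complete_laplacian mulmxBl mul_scalar_mx !mxE.
under eq_bigr do rewrite !mxE mulr1.
by rewrite sumr_const card_ord mulr1 subrr.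
Qed.

Definition path_incidence m : 'M[R]_(m.+1, m) :=
  \matrix_(k, i) ((k == i :> nat)%:R + (k == i.+1 :> nat)%:R).

Lemma path_incidence_gram m (i j : 'I_m) :
  ((path_incidence m)^T *m path_incidence m) i j =
  (i == j :> nat)%:R *+ 2 + (i == j.+1 :> nat)%:R + (j == i.+1 :> nat)%:R.
Proof.
rewrite mxE; under eq_bigr do rewrite !mxE mulrDl.
pose F k : R := (k == j :> nat)%:R + (k == j.+1)%:R.
rewrite big_split !(sum_ord_delta _ _ F) /= !ltnS ltn_ord ltnW //.
by rewrite /F eqSS (eq_sym i.+1) mulr2n; ring.
Qed.

Lemma sum_col_path_incidence m (i : 'I_m) : \sum_k path_incidence m k i = 2.
Proof.
under eq_bigr do rewrite mxE -[_%:R]mulr1 -[X in _ + X]mulr1.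
by rewrite big_split !(sum_ord_delta _ _ (fun _ => 1)) /= !ltnS ltn_ord ltnW.
Qed.

Lemma path_incidence_const_gram m :
  (path_incidence m)^T *m const_mx 1 *m path_incidence m = const_mx 4.
Proof.
have -> : (path_incidence m)^T *m (const_mx 1 : 'M_m.+1) = const_mx 2.
  apply/matrixP => i k; rewrite !mxE -(sum_col_path_incidence i).
  by apply: eq_bigr => l _; rewrite !mxE mulr1.
apply/matrixP => i j; rewrite !mxE.
under eq_bigr do rewrite mxE.
by rewrite -mulr_sumr sum_col_path_incidence; ring.
Qed.

(* The case [j < m] inverts [path_incidence m]; the case [j = m] says that
   the alternating sum of the entries of any vector in its range is zero. *)
Lemma path_incidence_alternating_sum m (x : 'cV[R]_m) (j : nat) :
  \sum_(k < m.+1 | (k <= j)%N) (-1) ^+ k * (path_incidence m *m x) k 0 =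
  \sum_(i < m | i == j :> nat) (-1) ^+ i * x i 0.
Proof.
under eq_bigr do rewrite mxE mulr_sumr.
rewrite exchange_big [RHS]big_mkcond /=; apply: eq_bigr => i _.
under eq_bigr do rewrite mulrA.
rewrite -mulr_suml big_mkcond.
pose G k : R := if (k <= j)%N then (-1) ^+ k else 0.
have -> : \sum_(k < m.+1)
      (if (k <= j)%N then (-1) ^+ k * path_incidence m k i else 0) =
    \sum_(k < m.+1) (k == i :> nat)%:R * G k +
    \sum_(k < m.+1) (k == i.+1 :> nat)%:R * G k.
  rewrite -big_split; apply: eq_bigr => k _; rewrite mxE /G.
  by case: ifP => _ /=; ring.
rewrite !sum_ord_delta !ltnS ltn_ord ltnW // /G.
case: ltngtP => _.
- by rewrite exprS; ring.
- by rewrite addr0 mul0r.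
- by rewrite addr0.
Qed.

Lemma path_incidence_inj m (x : 'cV[R]_m) : path_incidence m *m x = 0 -> x = 0.
Proof.
move=> Dx0; apply/matrixP => i j; rewrite (ord1 j) mxE.
have := path_incidence_alternating_sum x i.
rewrite Dx0 (big_pred1 i) // big1 => [/esym/eqP|k _]; last by rewrite mxE mulr0.
by rewrite mulf_eq0 signr_eq0 => /eqP.
Qed.

Lemma path_incidence_mul_const_eq0 m (x : 'cV[R]_m) c :
  ~~ odd m -> path_incidence m *m x = const_mx c -> x = 0.
Proof.
move=> even_m Dxc; apply: path_incidence_inj; rewrite Dxc.
have := path_incidence_alternating_sum x m.
rewrite [X in _ = X -> _]big_pred0 => [|i]; last exact: ltn_eqF.
rewrite Dxc (eq_bigl xpredT) => [|k]; last by rewrite -ltnS ltn_ord.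
under eq_bigr do rewrite mxE.
rewrite -mulr_suml sum_signr /= even_m mul1r => ->.
by apply/matrixP => i j; rewrite !mxE.
Qed.

Lemma path_incidence_mul_even_indicator m :
  odd m -> path_incidence m *m \col_(i < m) (~~ odd i)%:R = const_mx 1.
Proof.
move=> odd_m; apply/matrixP => k j; rewrite !mxE.
under eq_bigr do rewrite !mxE mulrDl (eq_sym (k : nat)) (eq_sym (k : nat)).
rewrite big_split /= (sum_ord_delta _ _ (fun i => (~~ odd i)%:R)).
case: k => [[|k] /=]; rewrite ltnS => k_lt_m.
  by rewrite (odd_gt0 odd_m) big1 ?addr0 // => i _; rewrite mul0r.
under eq_bigr do rewrite eqSS.
rewrite (sum_ord_delta _ _ (fun i => (~~ odd i)%:R)) k_lt_m.
have [lt_k1_m | m_eq] : (k.+1 < m)%N \/ k.+1 = m by lia.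
  by rewrite lt_k1_m /=; case: (odd k); rewrite /= ?add0r ?addr0.
by move: odd_m; rewrite -m_eq ltnn add0r /= => ->.
Qed.

Lemma idistC (i j : nat) : idist i j = idist j i.
Proof. exact: addnC. Qed.

Lemma idist_eq0 (i j : nat) : (idist i j == 0)%N = (i == j).
Proof. rewrite /idist; lia. Qed.

Lemma idist_eq1 (i j : nat) : (idist i j == 1)%N = (i == j.+1) || (j == i.+1).
Proof. rewrite /idist; lia. Qed.

Lemma Hmat_tr N : (Hmat R N)^T = Hmat R N.
Proof. by apply/matrixP => i j; rewrite /Hmat /Bmat /Lap !mxE idistC. Qed.

Lemma Hmat_path_incidence m :
  Hmat R m.+1 = 4^-1 *:
    ((path_incidence m)^T *m complete_laplacian m.+1 *m path_incidence m).
Proof.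
rewrite /complete_laplacian mulmxBr mul_mx_scalar mulmxBl -scalemxAl.
rewrite path_incidence_const_gram; apply/matrixP => i j.
have := path_incidence_gram i j; rewrite mxE.
rewrite /Hmat /Bmat /Lap !mxE => ->.
rewrite idist_eq0 idist_eq1 (eq_sym (j : nat)).
by case: eqP => ?; case: eqP => ?; case: eqP => ? /=; try lia; lra.
Qed.

Lemma Hmat_form m (x : 'cV[R]_m) :
  (x^T *m Hmat R m.+1 *m x) 0 0 =
  4^-1 * ((path_incidence m *m x)^T *m complete_laplacian m.+1
            *m (path_incidence m *m x)) 0 0.
Proof.
by rewrite Hmat_path_incidence -scalemxAr -scalemxAl mxE trmx_mul !mulmxA.
Qed.

Lemma Hmat_mul_even_indicator m :
  odd m -> Hmat R m.+1 *m \col_(i < m) (~~ odd i)%:R = 0.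
Proof.
move=> odd_m; rewrite Hmat_path_incidence -scalemxAl -!mulmxA.
rewrite path_incidence_mul_even_indicator // complete_laplacian_mul_const.
by rewrite !mulmx0 scaler0.
Qed.

End HmatFactorization.

Theorem lemma4p4 (R : realFieldType) (N : nat) (hN : (2 <= N)%N) :
  psd (Hmat R N) /\
  (~~ odd N -> singular (Hmat R N)) /\
  (odd N -> pd (Hmat R N)).
Proof.
case: N hN => [|m] // lt1m.
split; [|split].
- split=> [|x]; first exact: Hmat_tr.
  by rewrite Hmat_form mulr_ge0 ?invr_ge0 ?ler0n ?complete_laplacian_form_ge0.
- rewrite /= negbK => odd_m; rewrite /singular -det_tr; apply/eqP/det0P.
  exists (\col_(i < m) (~~ odd i)%:R)^T.
    apply/eqP => /matrixP /(_ 0 (Ordinal (lt1m : (0 < m)%N))); rewrite !mxE /=.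
    exact/eqP/oner_neq0.
  by rewrite -trmx_mul Hmat_mul_even_indicator // trmx0.
- move=> even_m; split=> [|x x_neq0]; first exact: Hmat_tr.
  rewrite Hmat_form pmulr_rgt0 ?invr_gt0 ?ltr0n //.
  rewrite lt_def complete_laplacian_form_ge0 andbT.
  apply: contra x_neq0 => /eqP/complete_laplacian_form_eq0 Dx_const.
  exact/eqP/(path_incidence_mul_const_eq0 even_m Dx_const).
Qed.
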